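(* Let $\lambda<\kappa$ be infinite cardinals and let $X$, $Y$ be non-trivial Banach spaces. Suppose $X$ is $\mathrm{ASQ}_{<\kappa}$ (respectively, $\mathrm{SQ}_{<\kappa}$). (a) If $H\subset L_\lambda(Y,X)$ is a closed subspace containing all operators $y^*\otimes x$ with $y^*\in Y^*$, $x\in X$, then $H$ is $\mathrm{ASQ}_{<\kappa}$ (respectively, $\mathrm{SQ}_{<\kappa}$). (b) If $H\subset L_\lambda(Y^*,X)$ is a closed subspace containing all operators $y\otimes x$ with $y\in Y$, $x\in X$, then $H$ is $\mathrm{ASQ}_{<\kappa}$ (respectively, $\mathrm{SQ}_{<\kappa}$).
   Context: $L_\lambda(Y,X)=\{T\in L(Y,X):\mathrm{dens}(T(Y))\le\lambda\}$ with the operator norm, where $\mathrm{dens}$ is the density character. For $y^*\in Y^*$ and $x\in X$, $y^*\otimes x$ is the operator $y\mapsto y^*(y)x$; for $y\in Y$, $y\otimes x$ is the operator $Y^*\ni y^*\mapsto y^*(y)x$. A Banach space $Z$ is $\mathrm{ASQ}_{<\kappa}$ if for every set $A\subset S_Z$ with $|A|<\kappa$ and every $\varepsilon>0$ there exists $y\in S_Z$ with $\|x\pm y\|\le 1+\varepsilon$ for all $x\in A$; $Z$ is $\mathrm{SQ}_{<\kappa}$ if for every such $A$ there exists $y\in S_Z$ with $\|x\pm y\|\le 1$ for all $x\in A$. *)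

From HB Require Import structures.
From mathcomp Require Import all_boot all_order all_algebra.
From mathcomp Require Import all_classical all_reals all_analysis.
Set Implicit Arguments. Unset Strict Implicit. Unset Printing Implicit Defensive.
Import Order.TTheory GRing.Theory Num.Theory.
Import numFieldNormedType.Exports.
Local Open Scope classical_set_scope.
Local Open Scope ring_scope.

(** Cardinals are represented by (the full set of) types: a cardinal
    kappa is [set: K] for some type K. *)
Definition card_lt {T U : Type} (A : set T) (B : set U) : Prop :=
  (A #<= B)%card /\ ~ (B #<= A)%card.

Section Operators.
Variable R : realType.

Definition bdd_lin (D : lmodType R) (nD : D -> R) (X : normedModType R)
    (T : D -> X) : Prop :=
  (forall (a : R) (u v : D), T (a *: u + v) = a *: T u + T v) /\
  exists C : R, forall d : D, `|T d| <= C * nD d.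

Definition opnorm (D : lmodType R) (nD : D -> R) (X : normedModType R)
    (T : D -> X) : R :=
  sup [set `|T d| | d in [set d : D | nD d <= 1]].

Definition dens_le (X : normedModType R) (S : set X) (L : Type) : Prop :=
  exists E : set X, E `<=` S /\ (E #<= [set: L])%card /\ S `<=` closure E.

Definition L_lambda (D : lmodType R) (nD : D -> R) (X : normedModType R)
    (L : Type) : set (D -> X) :=
  [set T | bdd_lin nD T /\ dens_le (range T) L].

Definition closed_subspace_L (D : lmodType R) (nD : D -> R)
    (X : normedModType R) (L : Type) (H : set (D -> X)) : Prop :=
  H `<=` @L_lambda D nD X L /\
  H (fun _ => 0) /\
  (forall (a : R) (S T : D -> X), H S -> H T -> H (fun d => a *: S d + T d)) /\
  (forall T, @L_lambda D nD X L T ->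
     (forall e : R, 0 < e -> exists S, H S /\ opnorm nD (fun d => T d - S d) < e) ->
     H T).

Definition ASQ_lt (V : zmodType) (N : V -> R) (H : set V) (K : Type) : Prop :=
  forall A : set V, A `<=` H -> (forall x, A x -> N x = 1) ->
    card_lt A [set: K] ->
    forall e : R, 0 < e ->
      exists y : V, H y /\ N y = 1 /\
        forall x, A x -> N (x + y) <= 1 + e /\ N (x - y) <= 1 + e.

Definition SQ_lt (V : zmodType) (N : V -> R) (H : set V) (K : Type) : Prop :=
  forall A : set V, A `<=` H -> (forall x, A x -> N x = 1) ->
    card_lt A [set: K] ->
      exists y : V, H y /\ N y = 1 /\
        forall x, A x -> N (x + y) <= 1 /\ N (x - y) <= 1.

Section Dual.
Variable Y : normedModType R.

Definition dual_pred : {pred Y -> R^o} :=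
  fun f => `[< bdd_lin (fun y : Y => `|y|) f >].

Lemma dual_closed : subsemimod_closed dual_pred.
Proof.
split; [split|].
- apply/asboolP; split=> [a u v|]; first by rewrite scaler0 addr0.
  by exists 0 => d; rewrite normr0 mul0r.
- move=> f g /asboolP[fl [Cf hf]] /asboolP[gl [Cg hg]]; apply/asboolP; split.
    move=> a u v; rewrite !fctE fl gl scalerDr.
    by rewrite -!addrA; congr (_ + _); rewrite addrCA.
  exists (Cf + Cg) => d /=; rewrite mulrDl.
  by apply: (le_trans (ler_normD _ _)); apply: lerD.
- move=> a f /asboolP[fl [Cf hf]]; apply/asboolP; split.
    by move=> b u v; rewrite !fctE fl scalerDr !scalerA mulrC.
  exists (`|a| * Cf) => d /=; rewrite normrZ -mulrA.
  by apply: ler_wpM2l => //.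
Qed.

HB.instance Definition _ := GRing.isSubmodClosed.Build R (Y -> R^o)
  dual_pred dual_closed.

Record dual := Dual { dval :> Y -> R^o ; dvalP : dval \in dual_pred }.
HB.instance Definition _ := [isSub for dval].
HB.instance Definition _ := [Choice of dual by <:].
HB.instance Definition _ := [SubChoice_isSubLmodule of dual by <:].

Definition dual_norm (f : dual) : R := opnorm (fun y : Y => `|y|) (dval f).

End Dual.

Definition tens_dual (Y X : normedModType R) (ys : dual Y) (x : X) : Y -> X :=
  fun y => dval ys y *: x.

Definition tens_bidual (Y X : normedModType R) (y : Y) (x : X) : dual Y -> X :=
  fun ys => dval ys y *: x.

Definition nontrivial (X : normedModType R) : Prop := exists x : X, x != 0.

End Operators.

(* Let A be a set of fewer than kappa norm-one operators of H. Every range T(B)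
   has a dense subset of cardinality at most lambda; normalising the nonzero
   vectors of all these subsets gives fewer than kappa unit vectors of X, since
   |A| * lambda < kappa (comparability of cardinals and Hessenberg's theorem
   mu * mu = mu, both obtained from Zorn's lemma). The (almost) squareness of X
   provides a unit vector x with |u +- x| <= 1 + eps for all of them, and by
   convexity and density |T d + a x| <= 1 + eps whenever |d| <= 1, |a| <= 1.
   A norming functional given by Hahn-Banach turns y^* (x) x, resp. y (x) x,
   into a norm-one operator S of H with values in [-1, 1] x on the unit ball,
   hence |T +- S| <= 1 + eps. *)
From HB Require Import structures.
From mathcomp Require Import all_boot all_order all_algebra.
From mathcomp Require Import all_classical all_reals all_analysis.
From mathcomp Require Import lra ring.
Set Implicit Arguments. Unset Strict Implicit. Unset Printing Implicit Defensive.
Import Order.TTheory GRing.Theory Num.Theory.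
Import numFieldNormedType.Exports.
Local Open Scope classical_set_scope.
Local Open Scope ring_scope.

(** * Cardinal arithmetic *)

Lemma Zorn_bigcup_above T (P : set (set T)) (B : set T) :
  (forall F : set (set T), F `<=` P -> total_on F subset -> P (\bigcup_(G in F) G)) ->
  P B -> exists A, [/\ P A, B `<=` A & forall C, A `<` C -> ~ P C].
Proof.
move=> Pchain PB.
have [|A [[PA AB] Amax]] := @Zorn_bigcup T [set G | P G /\ (G !=set0 -> B `<=` G)].
  move=> F FP Ftot; split; first by apply: Pchain => // G /FP[].
  by move=> [x [G FG Gx]] b Bb; exists G => //; apply: (FP G FG).2 => //; exists x.
have BA : B `<=` A.
  have [/AB //|A0 b Bb] := pselect (A !=set0); exfalso.
  apply: (Amax B); last by split=> // _.
  split=> [x Ax|/(_ b Bb) Ab]; exfalso; apply: A0; first by exists x.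
  by exists b.
exists A; split=> // C ltAC PC; apply: (Amax C ltAC); split=> // _.
exact: subset_trans BA (properW ltAC).
Qed.

Lemma total_on_ub2 T (F : set (set T)) G1 G2 : total_on F subset -> F G1 -> F G2 ->
  exists G, [/\ F G, G1 `<=` G & G2 `<=` G].
Proof.
by move=> Ftot F1 F2; have [G12|G21] := Ftot _ _ F1 F2; [exists G2|exists G1]; split.
Qed.

Section CardinalArithmetic.
Local Open Scope card_scope.

Lemma card_le_fun T U (A : set T) (B : set U) (f : T -> U) :
  (forall x, A x -> B (f x)) -> (forall x y, A x -> A y -> f x = f y -> x = y) ->
  A #<= B.
Proof.
move=> fAB finj; have : $|{injfun A >-> B}|.
  apply/injfunPex; exists f; first by move=> x /fAB.
  by move=> x y /set_mem Ax /set_mem Ay; apply: finj.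
by case=> g; apply: inj_card_le g.
Qed.

Lemma card_le_ex_fun T U (u0 : U) (A : set T) (B : set U) : A #<= B ->
  exists f : T -> U, (forall x, A x -> B (f x)) /\
    (forall x y, A x -> A y -> f x = f y -> x = y).
Proof.
move/card_leP => [g].
pose f x := if pselect (A x) is left Ax then set_val (g (SigSub (mem_set Ax)))
  else u0.
exists f; split=> [x Ax|x y Ax Ay]; rewrite /f.
  by case: pselect => // Ax'; apply: set_valP.
case: pselect => // Ax'; case: pselect => // Ay'.
move=> /val_inj /(@inj _ _ _ g) => /(_ (mem_set I) (mem_set I)) gxy.
by have := congr1 val gxy.
Qed.

Lemma card_le_neq0 T U (A : set T) (B : set U) : A #<= B -> A !=set0 -> B !=set0.
Proof.
move=> AB [a Aa]; apply: contrapT => /nonemptyPn B0.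
by move: AB; rewrite B0 => /card_le0P A0; rewrite A0 in Aa.
Qed.

Lemma card_le_setX T T' U U' (A : set T) (A' : set T') (B : set U) (B' : set U') :
  A #<= A' -> B #<= B' -> A `*` B #<= A' `*` B'.
Proof.
move=> AA' BB'.
have [[[a b] [/= Aa Bb]]|/nonemptyPn->] := pselect (A `*` B !=set0);
  last exact: card_ge0.
have [a' _] := card_le_neq0 AA' (ex_intro _ a Aa).
have [b' _] := card_le_neq0 BB' (ex_intro _ b Bb).
have [f [fA fI]] := card_le_ex_fun a' AA'.
have [g [gB gI]] := card_le_ex_fun b' BB'.
apply: (@card_le_fun _ _ _ _ (fun z => (f z.1, g z.2))) => [[x y] [/fA ? /gB ?]|] //.
by move=> [x y] [x' y'] [/= Ax By] [/= Ax' By'] [/fI-> // /gI->].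
Qed.

Lemma card_lt_le_trans T U V (A : set T) (B : set U) (C : set V) :
  A #<= B -> card_lt B C -> card_lt A C.
Proof.
move=> AB [BC nCB]; split; first exact: card_le_trans AB BC.
by move=> CA; apply: nCB; apply: card_le_trans CA AB.
Qed.

Definition partial_inj T U (G : set (T * U)) :=
  (forall a b b', G (a, b) -> G (a, b') -> b = b') /\
  (forall a a' b, G (a, b) -> G (a', b) -> a = a').

Lemma partial_inj_bigcup T U (F : set (set (T * U))) : total_on F subset ->
  (forall G, F G -> partial_inj G) -> partial_inj (\bigcup_(G in F) G).
Proof.
move=> Ftot Finj; split=> [a b b'|a a' b] [G1 F1 h1] [G2 F2 h2];
  have [G [FG s1 s2]] := total_on_ub2 Ftot F1 F2; have [Gf Gi] := Finj G FG.
  exact: Gf (s1 _ h1) (s2 _ h2).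
exact: Gi (s1 _ h1) (s2 _ h2).
Qed.

Lemma card_le_partial_inj T U (A : set T) (B : set U) (G : set (T * U)) :
  partial_inj G -> G `<=` A `*` B -> (forall a, A a -> exists b, G (a, b)) ->
  A #<= B.
Proof.
move=> [Gf Gi] GAB Gtot.
have [[a0 Aa0]|/nonemptyPn->] := pselect (A !=set0); last exact: card_ge0.
have [b0 _] := Gtot a0 Aa0.
have /choice[f Gf'] : forall a, exists b, A a -> G (a, b).
  by move=> a; have [/Gtot[b]|] := pselect (A a); [exists b|exists b0].
apply: (card_le_fun (f := f)) => [a /Gf'/GAB[] //|a a' Aa Aa' faa'].
by apply: (Gi a a' (f a) (Gf' a Aa)); rewrite faa'; apply: Gf'.
Qed.

Lemma card_le_total T U (A : set T) (B : set U) : A #<= B \/ B #<= A.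
Proof.
pose P (G : set (T * U)) := G `<=` A `*` B /\ partial_inj G.
have [|M [[MAB Minj] Mmax]] := @Zorn_bigcup _ P.
  move=> F FP Ftot; split; first by move=> z [G /FP[GAB _] /GAB].
  by apply: partial_inj_bigcup => // G /FP[].
have [MA|/existsNP[a /not_implyP[Aa Ma]]] :=
  pselect (forall x, A x -> exists y, M (x, y)).
  by left; apply: card_le_partial_inj Minj MAB MA.
have [MB|/existsNP[b /not_implyP[Bb Mb]]] :=
  pselect (forall y, B y -> exists x, M (x, y)).
  right; apply: (@card_le_partial_inj _ _ _ _ [set z | M (z.2, z.1)]) => //.
    case: Minj => Mf Mi; split=> [y x x' h h'|y y' x h h'].
      exact: Mi h h'.
    exact: Mf h h'.
  by move=> [y x] /MAB[].
exfalso; apply: (Mmax (M `|` [set (a, b)])).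
  split=> [z Mz|/(_ (a, b) (or_intror erefl)) Mab]; first by left.
  by apply: Ma; exists b.
split=> [z [/MAB //|-> //]|]; case: Minj => Mf Mi.
have Mab x y : M (x, y) -> x <> a /\ y <> b.
  by move=> Mxy; split=> [xa|yb]; [apply: Ma; exists y|apply: Mb; exists x];
    rewrite -?xa -?yb.
split=> [x y y'|x x' y] [Mxy|/pair_equal_spec[-> ->]]
    [Mxy'|/pair_equal_spec[ex ey]].
- exact: Mf Mxy Mxy'.
- by have [] := Mab _ _ Mxy.
- by have [] := Mab _ _ Mxy'.
- by rewrite ey.
- exact: Mi Mxy Mxy'.
- by have [] := Mab _ _ Mxy.
- by have [] := Mab _ _ Mxy'.
- by rewrite ex.
Qed.

Lemma card_setU_le T U (A B : set T) (C : set U) (c c' : U) :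
  C c -> C c' -> c <> c' -> C `*` C #<= C -> A #<= C -> B #<= C -> A `|` B #<= C.
Proof.
move=> Cc Cc' cc' CC AC BC; apply: card_le_trans CC.
have [f [fA fI]] := card_le_ex_fun c AC; have [g [gB gI]] := card_le_ex_fun c BC.
pose h x := if pselect (A x) then (f x, c) else (g x, c').
apply: (card_le_fun (f := h)) => [x ABx|x y ABx ABy]; rewrite /h.
  by case: pselect => Ax; split=> //; [apply: fA|apply: gB; case: ABx].
case: pselect => Ax; case: pselect => Ay /pair_equal_spec[hxy hc].
- exact: fI.
- by have := cc' hc.
- by have := cc' (esym hc).
- by apply: gI hxy; [case: ABx|case: ABy].
Qed.

Definition pairing_dom T (G : set (T * T * T)) := [set p | exists q v, G (p, q, v)].

(* [G] is the graph of an injection of [pairing_dom G `*` pairing_dom G] into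
   [pairing_dom G]. *)
Definition pairing T (G : set (T * T * T)) :=
  [/\ partial_inj G,
      forall p q v, G (p, q, v) -> pairing_dom G q /\ pairing_dom G v &
      forall p q, pairing_dom G p -> pairing_dom G q -> exists v, G (p, q, v)].

Lemma pairing_domS T (G G' : set (T * T * T)) :
  G `<=` G' -> pairing_dom G `<=` pairing_dom G'.
Proof. by move=> GG' p [q [v Gv]]; exists q, v; apply: GG'. Qed.

Lemma pairing_bigcup T (F : set (set (T * T * T))) : total_on F subset ->
  (forall G, F G -> pairing G) -> pairing (\bigcup_(G in F) G).
Proof.
move=> Ftot Fpair.
have domF G : F G -> pairing_dom G `<=` pairing_dom (\bigcup_(G in F) G).
  by move=> FG; apply: pairing_domS => z Gz; exists G.
split.
- by apply: partial_inj_bigcup => // G /Fpair[].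
- move=> p q v [G FG Gv]; have [_ Gdom _] := Fpair G FG.
  by have [Gq Gv'] := Gdom _ _ _ Gv; split; [exact: domF Gq|exact: domF Gv'].
- move=> p q [q1 [v1 [G1 F1 h1]]] [q2 [v2 [G2 F2 h2]]].
  have [G [FG s1 s2]] := total_on_ub2 Ftot F1 F2; have [_ _ Gtot] := Fpair G FG.
  have [|//|v Gv] := Gtot p q; first by exists q1, v1; apply: s1.
    by exists q2, v2; apply: s2.
  by exists v, G.
Qed.

Lemma pairing_card_le T (G : set (T * T * T)) : pairing G ->
  pairing_dom G `*` pairing_dom G #<= pairing_dom G.
Proof.
move=> [Ginj Gdom Gtot]; apply: card_le_partial_inj Ginj _ _.
  move=> [[p q] v] Gv; have [Sq Sv] := Gdom _ _ _ Gv.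
  by split=> //; split=> //; exists q, v.
by move=> [p q] [/= Sp Sq]; apply: Gtot.
Qed.

Definition pairing_ext T (G : set (T * T * T)) (U : set T) (w : T * T -> T) :=
  G `|` [set z | [/\ U z.1.1, U z.1.2,
    ~ (pairing_dom G z.1.1 /\ pairing_dom G z.1.2) & z.2 = w z.1]].

Section PairingExtension.
Variables (T : Type) (G : set (T * T * T)) (U : set T) (w : T * T -> T).
Let S := pairing_dom G.
Hypotheses (pG : pairing G) (SU : S `<=` U)
  (wU : forall z, (U `*` U) z -> (U `\` S) (w z))
  (wI : forall z z', (U `*` U) z -> (U `*` U) z' -> w z = w z' -> z = z').

Lemma pairing_dom_ext : pairing_dom (pairing_ext G U w) = U.
Proof.
apply/seteqP; split=> [p [q [v [Gv|[]//]]]|p Up]; first by apply: SU; exists q, v.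
have [Sp|nSp] := pselect (S p); first by apply: pairing_domS Sp => z Gz; left.
by exists p, (w (p, p)); right; split=> // -[].
Qed.

Lemma pairing_ext_pairing : pairing (pairing_ext G U w).
Proof.
have [[Gf Gi] Gdom Gtot] := pG.
have GS p q v : G (p, q, v) -> [/\ S p, S q & S v].
  by move=> Gv; have [Sq Sv] := Gdom _ _ _ Gv; split=> //; exists q, v.
split.
- split=> [[p q] v v'|[p q] [p' q'] v] [Gv|[/= Up Uq nS ev]]
      [Gv'|[/= Up' Uq' nS' ev']].
  + exact: Gf Gv Gv'.
  + by have [Sp Sq _] := GS _ _ _ Gv; case: nS'.
  + by have [Sp Sq _] := GS _ _ _ Gv'; case: nS.
  + by rewrite ev ev'.
  + exact: Gi Gv Gv'.
  + have [_ _ Sv] := GS _ _ _ Gv; have [_] := @wU (p', q') (conj Up' Uq').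
    by rewrite -ev'.
  + have [_ _ Sv] := GS _ _ _ Gv'; have [_] := @wU (p, q) (conj Up Uq).
    by rewrite -ev.
  + by apply: (@wI (p, q) (p', q') (conj Up Uq) (conj Up' Uq')); rewrite -ev -ev'.
- move=> p q v [/GS[_ Sq Sv]|[/= Up Uq _ ->]]; rewrite pairing_dom_ext.
    by split; apply: SU.
  by split=> //; have [] := @wU (p, q) (conj Up Uq).
- move=> p q; rewrite pairing_dom_ext => Up Uq.
  have [[Sp Sq]|nS] := pselect (S p /\ S q); last by exists (w (p, q)); right.
  by have [v Gv] := Gtot p q Sp Sq; exists v; left.
Qed.

End PairingExtension.

Lemma pairing_extend T (M : set T) (G : set (T * T * T)) (c c' : T) :
  pairing G -> pairing_dom G `<=` M -> pairing_dom G c -> pairing_dom G c' ->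
  c <> c' -> pairing_dom G #<= M `\` pairing_dom G ->
  exists G', [/\ pairing G', pairing_dom G' `<=` M & G `<` G'].
Proof.
set S := pairing_dom G => pG SM Sc Sc' cc' SMS.
have [k [kM kI]] := card_le_ex_fun c SMS.
(* [U] has the cardinality of [S], so [U `*` U] injects into the part [k @` S]
   of [U] disjoint from [S]. *)
set U := S `|` k @` S.
have US : U #<= S.
  exact: card_setU_le Sc Sc' cc' (pairing_card_le pG) (card_lexx S) (card_image_le k S).
have /card_eqPle[_ SkS] : k @` S #= S.
  by apply: inj_card_eq => x y /set_mem Sx /set_mem Sy; apply: kI.
have [w [wkS wI]] : exists w : T * T -> T, (forall z, (U `*` U) z -> (k @` S) (w z)) /\
    (forall z z', (U `*` U) z -> (U `*` U) z' -> w z = w z' -> z = z').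
  apply: (card_le_ex_fun c); apply: card_le_trans (card_le_setX US US) _.
  exact: card_le_trans (pairing_card_le pG) SkS.
have kSU x : (k @` S) x -> (U `\` S) x.
  by move=> [y Sy <-]; have /kM[_ nSky] := Sy; split=> //; right; exists y.
have wU z : (U `*` U) z -> (U `\` S) (w z) by move/wkS/kSU.
have SU : S `<=` U by move=> x; left.
exists (pairing_ext G U w); rewrite pairing_dom_ext //; split.
- exact: pairing_ext_pairing.
- by move=> p [/SM //|[q /kM[Mkq _] <-]].
split=> [z Gz|extG]; first by left.
have [Ukc nSkc] : (U `\` S) (k c) by apply: kSU; exists c.
have /(pairing_domS extG) [] : pairing_dom (pairing_ext G U w) (k c).
  by rewrite pairing_dom_ext.
by move=> q [v Gv]; apply: nSkc; exists q, v.
Qed.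

Lemma card_setXX_le T (M : set T) : infinite_set M -> M `*` M #<= M.
Proof.
move=> /infiniteP NM; have [m0 _] := card_le_neq0 NM (ex_intro _ 0%N I).
have [g [gM /(_ _ _ I I) gI]] := card_le_ex_fun m0 NM.
have [h [_ /(_ _ _ I I) hI]] := card_le_ex_fun 0%N (proj1 (card_eqPle _ _) card_nat2).1.
pose G0 := [set z | exists i j, z = (g i, g j, g (h (i, j)))].
have domG0 i : pairing_dom G0 (g i) by exists (g i), (g (h (i, i))), i, i.
have [||G [[pG SM] G0G Gmax]] :=
    @Zorn_bigcup_above _ [set G | pairing G /\ pairing_dom G `<=` M] G0.
- move=> F FP Ftot; split; first by apply: pairing_bigcup => // G /FP[].
  by move=> p [q [v [G /FP[_ GM] Gv]]]; apply: GM; exists q, v.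
- split; last by move=> p [q [v [i [j [-> _ _]]]]]; apply: gM.
  split.
  + split=> [[p q] v v'|[p q] [p' q'] v] [i [j [-> -> ->]]] [i' [j' []]].
      by move=> /gI-> /gI-> ->.
    by move=> -> -> /gI/hI[-> ->].
  + by move=> p q v [i [j [_ -> ->]]].
  + by move=> p q [q1 [v1 [i [j [-> _ _]]]]] [q2 [v2 [i' [j' [-> _ _]]]]];
      exists (g (h (i, i'))), i, i'.
set S := pairing_dom G.
have SG i : S (g i) by apply: pairing_domS G0G _ (domG0 i).
have g01 : g 0%N <> g 1%N by move/gI.
(* Otherwise [S] injects into [M `\` S] and [G] extends, against maximality. *)
have [MSS|SMS] := card_le_total (M `\` S) S.
  have MS : M #<= S.
    apply: card_le_trans (card_setU_le (SG 0%N) (SG 1%N) g01 (pairing_card_le pG)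
      (card_lexx S) MSS).
    by apply: subset_card_le => p Mp; have [Sp|nSp] := pselect (S p); [left|right].
  apply: card_le_trans (card_le_setX MS MS) _.
  exact: card_le_trans (pairing_card_le pG) (subset_card_le SM).
have [G' [pG' G'M GG']] := pairing_extend pG SM (SG 0%N) (SG 1%N) g01 SMS.
by case: (Gmax G' GG').
Qed.

Lemma card_setX_lt T U V (A : set T) (B : set U) (C : set V) :
  card_lt A C -> card_lt B C -> infinite_set B -> card_lt (A `*` B) C.
Proof.
move=> AC BC infB; have [AB|BA] := card_le_total A B.
  apply: card_lt_le_trans BC.
  exact: card_le_trans (card_le_setX AB (card_lexx B)) (card_setXX_le infB).
have infA : infinite_set A by apply/infiniteP; apply: card_le_trans BA; apply/infiniteP.
apply: card_lt_le_trans AC.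
exact: card_le_trans (card_le_setX (card_lexx A) BA) (card_setXX_le infA).
Qed.

Lemma card_bigcup_le I T U (A : set I) (F : I -> set T) (B : set U) :
  (forall i, A i -> F i #<= B) -> \bigcup_(i in A) F i #<= A `*` B.
Proof.
move=> FB.
have [[t0 [i0 Ai0 Ft0]]|/nonemptyPn->] := pselect (\bigcup_(i in A) F i !=set0);
  last exact: card_ge0.
have [u0 _] := card_le_neq0 (FB i0 Ai0) (ex_intro _ t0 Ft0).
have /choice[idx idxP] : forall t, exists i, (\bigcup_(i in A) F i) t -> A i /\ F i t.
  by move=> t; have [[i Ai Fit]|] := pselect ((\bigcup_(i in A) F i) t);
    [exists i|exists i0].
have /choice[f fP] : forall i, exists f : T -> U, A i ->
    (forall t, F i t -> B (f t)) /\
    (forall t t', F i t -> F i t' -> f t = f t' -> t = t').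
  move=> i; have [/FB/(card_le_ex_fun u0)[f ?]|] := pselect (A i); first by exists f.
  by exists (fun=> u0).
apply: (card_le_fun (f := fun t => (idx t, f (idx t) t))) => [t /idxP[Ai Fit]|t t'].
  by split=> //; apply: (fP _ Ai).1.
move=> /idxP[Ai Fit] /idxP[Ai' Fit'] /pair_equal_spec[ett' ftt'].
by rewrite -ett' in Fit' ftt'; apply: (fP _ Ai).2.
Qed.

End CardinalArithmetic.

(** * Norming functionals *)

Section HahnBanach.
Variables (R : realType) (Y : normedModType R).

(* Graphs of norm-dominated linear functionals on subspaces of [Y]. *)
Definition dominated_graph (G : set (Y * R)) :=
  (forall a u v s t, G (u, s) -> G (v, t) -> G (a *: u + v, a * s + t)) /\
  (forall u s, G (u, s) -> s <= `|u|).

Lemma dominated_graph0 G z : dominated_graph G -> G z -> G (0, 0).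
Proof.
move=> [Glin _]; case: z => u s Gus.
by have := Glin (-1) u u s s Gus Gus; rewrite scaleN1r addNr mulN1r addNr.
Qed.

Lemma dominated_graph_fun G u s s' : dominated_graph G -> G (u, s) -> G (u, s') ->
  s = s'.
Proof.
move=> [Glin Gdom] Gs Gs'.
have := Gdom _ _ (Glin (-1) u u s s' Gs Gs'); rewrite scaleN1r addNr normr0 mulN1r.
have := Gdom _ _ (Glin (-1) u u s' s Gs' Gs); rewrite scaleN1r addNr normr0 mulN1r.
lra.
Qed.

Lemma dominated_graph_gap G y : dominated_graph G -> G (0, 0) ->
  exists c, (forall u s, G (u, s) -> s - `|u - y| <= c) /\
            (forall v t, G (v, t) -> c <= `|v + y| - t).
Proof.
move=> [Glin Gdom] G00.
pose E := [set r : R | exists u s, G (u, s) /\ r = s - `|u - y|].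
have Eub v t : G (v, t) -> ubound E (`|v + y| - t).
  move=> Gvt _ [u [s [Gus ->]]].
  have := Gdom _ _ (Glin 1 u v s t Gus Gvt); rewrite scale1r mul1r => Guv.
  suff : s + t <= `|u - y| + `|v + y| by lra.
  apply: le_trans Guv _; rewrite (_ : u + v = (u - y) + (v + y)) ?ler_normD //.
  by rewrite addrACA addNr addr0.
have E0 : E !=set0 by exists (0 - `|0 - y|), 0, 0.
exists (sup E); split=> [u s Gus|v t Gvt]; last exact: ge_sup E0 (Eub _ _ Gvt).
apply: sup_upper_bound; last by exists u, s.
by split=> //; exists (`|0 + y| - 0); apply: Eub.
Qed.

Lemma dominated_graph_extend G y : dominated_graph G -> G !=set0 ->
  ~ (exists s, G (y, s)) -> exists G', dominated_graph G' /\ G `<` G'.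
Proof.
move=> domG [z Gz] ny; have G00 := dominated_graph0 domG Gz.
have [c [cE cU]] := dominated_graph_gap y domG G00.
case: domG => Glin Gdom.
have Gscale b u s : G (u, s) -> G (b *: u, b * s).
  by move=> Gus; have := Glin b u 0 s 0 Gus G00; rewrite !addr0.
pose G' := [set z | exists u s a, G (u, s) /\ z = (u + a *: y, s + a * c)].
exists G'; split; last first.
  split=> [[u s] Gus|G'G]; first by exists u, s, 0; rewrite scale0r mul0r !addr0.
  by apply: ny; exists c; apply: G'G; exists 0, 0, 1; rewrite scale1r mul1r !add0r.
split=> [a _ _ _ _ [u [s [al [Gus [-> ->]]]]] [v [t [be [Gvt [-> ->]]]]]|].
  exists (a *: u + v), (a * s + t), (a * al + be); split; first exact: Glin.
  by congr pair; [rewrite scalerDr scalerA scalerDl addrACA|ring].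
move=> _ _ [u [s [al [Gus [-> ->]]]]].
(* Rescaling by [|al|] reduces domination to the two bounds on [c]. *)
have [alneg|alpos|->] := ltgtP al 0; last by rewrite scale0r mul0r !addr0; apply: Gdom.
- have := cE _ _ (Gscale (- al)^-1 _ _ Gus).
  have -> : u + al *: y = (- al) *: ((- al)^-1 *: u - y).
    by rewrite scalerBr scalerA mulfV ?oppr_eq0 ?lt_eqF // scale1r scaleNr opprK.
  have alpos : 0 < - al by rewrite oppr_gt0.
  rewrite normrZ gtr0_norm // -(ler_pM2l alpos) mulrBr mulrA mulfV ?gt_eqF //.
  lra.
- have := cU _ _ (Gscale al^-1 _ _ Gus).
  have -> : u + al *: y = al *: (al^-1 *: u + y).
    by rewrite scalerDr scalerA mulfV ?gt_eqF // scale1r.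
  rewrite normrZ gtr0_norm // -(ler_pM2l alpos) mulrBr mulrA mulfV ?gt_eqF //.
  lra.
Qed.

Lemma exists_norming_functional (y0 : Y) : `|y0| = 1 -> exists f : Y -> R,
  [/\ forall a u v, f (a *: u + v) = a * f u + f v,
      forall y, `|f y| <= `|y| & f y0 = 1].
Proof.
move=> ny0; pose B := [set z : Y * R | exists t, z = (t *: y0, t)].
have domB : dominated_graph B.
  split=> [a u v s t [t1 [-> ->]] [t2 [-> ->]]|u s [t [-> ->]]].
    by exists (a * t1 + t2); rewrite scalerDl scalerA.
  by rewrite normrZ ny0 mulr1 ler_norm.
have By0 : B (y0, 1) by exists 1; rewrite scale1r.
have [||G [domG BG Gmax]] := @Zorn_bigcup_above _ dominated_graph B => //.
  move=> F Fdom Ftot; split=> [a u v s t [G1 F1 h1] [G2 F2 h2]|u s [G FG Gus]].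
    have [G [FG s1 s2]] := total_on_ub2 Ftot F1 F2.
    by exists G => //; apply: (Fdom G FG).1; [apply: s1|apply: s2].
  exact: (Fdom G FG).2.
have Gtot y : exists s, G (y, s).
  apply: contrapT => ny.
  have [G' [domG' GG']] := dominated_graph_extend domG (ex_intro _ _ (BG _ By0)) ny.
  exact: Gmax GG' domG'.
have G00 := dominated_graph0 domG (BG _ By0).
have /choice[f Gf] := Gtot; have [Glin Gdom] := domG.
exists f; split.
- by move=> a u v; apply: dominated_graph_fun domG (Gf _) (Glin _ _ _ _ _ (Gf u) (Gf v)).
- move=> y; rewrite ler_norml Gdom ?andbT //.
  have := Gdom _ _ (Glin (-1) y 0 (f y) 0 (Gf y) G00).
  by rewrite scaleN1r addr0 mulN1r addr0 normrN; lra.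
- exact: dominated_graph_fun domG (Gf y0) (BG _ By0).
Qed.

End HahnBanach.

(** * Almost squareness of operator spaces *)

Section SquareGeometry.
Variables (R : realType) (X : normedModType R).

Lemma norm_add_scale_le (z x : X) (c a : R) :
  `|z + x| <= c -> `|z - x| <= c -> `|a| <= 1 -> `|z + a *: x| <= c.
Proof.
move=> zx zx' /[!ler_norml] /andP[a1 a2].
have -> : z + a *: x = ((1 + a) / 2) *: (z + x) + ((1 - a) / 2) *: (z - x).
  rewrite !scalerDr !scalerN -addrACA -scalerDl -scalerBl.
  have -> : (1 + a) / 2 + (1 - a) / 2 = 1 :> R by field.
  have -> : (1 + a) / 2 - (1 - a) / 2 = a :> R by field.
  by rewrite scale1r.
apply: (le_trans (ler_normD _ _)); rewrite !normrZ !ger0_norm ?divr_ge0 //; try lra.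
have -> : c = (1 + a) / 2 * c + (1 - a) / 2 * c by field.
by apply: lerD; apply: ler_wpM2l => //; apply: divr_ge0; lra.
Qed.

Variables (x : X) (eps : R) (E : set X).
Hypotheses (eps0 : 0 <= eps) (nx : `|x| = 1)
  (hE : forall w b, E w -> w != 0 -> `|b| <= 1 -> `| `|w|^-1 *: w + b *: x| <= 1 + eps).

Lemma norm_add_scale_le_dense w b : E w -> `|b| <= 1 ->
  `|w + b *: x| <= `|w| * (1 + eps) + `|1 - `|w| |.
Proof.
move=> Ew b1; have [->|w0] := eqVneq w 0.
  by rewrite add0r normr0 mul0r add0r subr0 normr1 normrZ nx mulr1.
have w_gt0 : 0 < `|w| by rewrite normr_gt0.
have -> : w + b *: x = `|w| *: (`|w|^-1 *: w + b *: x) + (1 - `|w|) *: (b *: x).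
  rewrite scalerDr scalerA mulfV ?gt_eqF // scale1r -addrA; congr (_ + _).
  by rewrite -scalerDl addrC subrK scale1r.
apply: (le_trans (ler_normD _ _)); rewrite !normrZ gtr0_norm // nx mulr1.
by apply: lerD; [apply: ler_wpM2l; [apply: ltW|apply: hE]|apply: ler_piMr].
Qed.

Lemma norm_add_scale_le_closure z b : closure E z -> `|z| <= 1 -> `|b| <= 1 ->
  `|z + b *: x| <= 1 + eps.
Proof.
move=> Ez z1 b1.
pose phi (z : X) := `|z| * (1 + eps) + `|1 - `|z| | - `|z + b *: x|.
have : closed (phi @^-1` [set r | 0 <= r]).
  apply: preimage_closed (@closed_ge _ _) => y _.
  have normX := @norm_continuous _ X; have normR := @norm_continuous _ R^o.
  apply: (@continuousB R R^o X (fun z => `|z| * (1 + eps) + `|1 - `|z| |)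
    (fun z => `|z + b *: x|)).
    apply: (@continuousD R R^o X (fun z => `|z| * (1 + eps)) (fun z => `|1 - `|z| |)).
      apply: (@continuousM R X Num.norm (cst (1 + eps))); first exact: normX.
      exact: cst_continuous.
    apply: (@continuous_comp _ _ _ (fun z : X => 1 - `|z| : R^o) Num.norm).
      apply: (@continuousB R R^o X (cst 1) Num.norm); last exact: normX.
      exact: cst_continuous.
    exact: normR.
  apply: (@continuous_comp _ _ _ (fun z : X => z + b *: x) Num.norm); last exact: normX.
  by apply: (@continuousD R X X id (cst (b *: x))); [exact: cvg_id|apply: cst_continuous].
move=> /closure_id phiE.
(* [phi] is continuous and nonnegative on [E], hence on the closure of [E]. *)
have /closureS : E `<=` phi @^-1` [set r | 0 <= r].
  by move=> w Ew; rewrite /= /phi subr_ge0; apply: norm_add_scale_le_dense.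
move=> /(_ z Ez); rewrite -phiE /= /phi subr_ge0 ger0_norm ?subr_ge0 // => h.
have := ler_piMl eps0 z1; rewrite mulrDr mulr1 in h; lra.
Qed.

End SquareGeometry.

Section SquareUpTo.
Variable R : realType.

Definition SQ_up_to (V : zmodType) (N : V -> R) (H : set V) (K : Type) (eps : R) :=
  forall A : set V, A `<=` H -> (forall x, A x -> N x = 1) -> card_lt A [set: K] ->
    exists y : V, H y /\ N y = 1 /\
      forall x, A x -> N (x + y) <= 1 + eps /\ N (x - y) <= 1 + eps.

Lemma ASQ_ltP (V : zmodType) (N : V -> R) (H : set V) (K : Type) :
  ASQ_lt N H K <-> forall e, 0 < e -> SQ_up_to N H K e.
Proof. by split=> hH => [e e0 A AH A1 AK|A AH A1 AK e e0]; apply: hH. Qed.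

Lemma SQ_ltP (V : zmodType) (N : V -> R) (H : set V) (K : Type) :
  SQ_lt N H K <-> SQ_up_to N H K 0.
Proof. by rewrite /SQ_up_to addr0. Qed.

End SquareUpTo.

Section OperatorNorm.
Variables (R : realType) (D : lmodType R) (nD : D -> R) (X : normedModType R).
Hypotheses (nD_ge0 : forall d, 0 <= nD d) (nD0 : nD 0 = 0).

Lemma opnorm_ub (T : D -> X) d : bdd_lin nD T -> nD d <= 1 -> `|T d| <= opnorm nD T.
Proof.
move=> [_ [C hC]] d1; apply: sup_upper_bound; last by exists d.
split; first by exists `|T d|, d.
exists `|C| => _ [e e1 <-]; apply: (le_trans (hC e)).
apply: (le_trans (ler_wpM2r (nD_ge0 e) (ler_norm C))).
by rewrite -[leRHS]mulr1; apply: ler_wpM2l.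
Qed.

Lemma opnorm_le (T : D -> X) M : (forall d, nD d <= 1 -> `|T d| <= M) ->
  opnorm nD T <= M.
Proof.
move=> hM; apply: ge_sup; first by exists `|T 0|, 0; rewrite // /= nD0.
by move=> _ [e e1 <-]; apply: hM.
Qed.

Lemma opnorm_rank_one (f : D -> R) (x : X) d0 :
  (forall a u v, f (a *: u + v) = a * f u + f v) -> (forall d, `|f d| <= nD d) ->
  nD d0 <= 1 -> f d0 = 1 -> `|x| = 1 -> opnorm nD (fun d => f d *: x) = 1.
Proof.
move=> flin fb d01 fd0 nx; apply/le_anti/andP; split.
  by apply: opnorm_le => d d1; rewrite normrZ nx mulr1 (le_trans (fb d)).
have <- : `|f d0 *: x| = 1 by rewrite fd0 scale1r.
apply: opnorm_ub d01; split; first by move=> a u v; rewrite flin scalerDl scalerA.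
by exists 1 => d; rewrite normrZ nx mulr1 mul1r.
Qed.

Definition rank_one_rich (H : set (D -> X)) := forall x : X, `|x| = 1 ->
  exists S, [/\ H S, opnorm nD S = 1 &
    forall d, nD d <= 1 -> exists2 a : R, `|a| <= 1 & S d = a *: x].

Lemma opnorm_add_rank_one_le (T S : D -> X) (E : set X) (x : X) (eps : R) :
  0 <= eps -> `|x| = 1 ->
  (forall w b, E w -> w != 0 -> `|b| <= 1 -> `| `|w|^-1 *: w + b *: x| <= 1 + eps) ->
  bdd_lin nD T -> opnorm nD T = 1 -> range T `<=` closure E ->
  (forall d, nD d <= 1 -> exists2 a : R, `|a| <= 1 & S d = a *: x) ->
  opnorm nD (T + S) <= 1 + eps /\ opnorm nD (T - S) <= 1 + eps.
Proof.
move=> eps0 nx hE Tbdd T1 TE Sx.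
have TSle d b : nD d <= 1 -> `|b| <= 1 -> `|T d + b *: x| <= 1 + eps.
  move=> d1 b1; apply: (norm_add_scale_le_closure eps0 nx hE) b1.
    by apply: TE; exists d.
  by rewrite -T1; apply: opnorm_ub.
split; apply: opnorm_le => d d1; have [a a1 Sd] := Sx d d1; rewrite !fctE Sd.
  exact: TSle.
by rewrite -scaleNr; apply: TSle; rewrite ?normrN.
Qed.

Lemma exists_small_dense (K L : Type) (A : set (D -> X)) :
  A `<=` L_lambda nD L -> card_lt A [set: K] ->
  infinite_set [set: L] -> card_lt [set: L] [set: K] ->
  exists E : set X, card_lt E [set: K] /\ forall T, A T -> range T `<=` closure E.
Proof.
move=> AL AK infL LK.
have /choice[Ef EfP] : forall T, exists E : set X, A T ->
    (E #<= [set: L])%card /\ range T `<=` closure E.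
  move=> T; have [/AL[_ [E [_ [EL TE]]]]|nAT] := pselect (A T).
    by exists E.
  by exists set0 => /nAT.
exists (\bigcup_(T in A) Ef T); split.
  apply: card_lt_le_trans (card_setX_lt AK LK infL).
  by apply: card_bigcup_le => T /EfP[].
move=> T AT; apply: subset_trans (proj2 (EfP T AT)) (closureS _).
by move=> w Ew; exists T.
Qed.

Lemma SQ_up_to_opnorm (K L : Type) (H : set (D -> X)) (eps : R) :
  0 <= eps -> infinite_set [set: L] -> card_lt [set: L] [set: K] ->
  H `<=` L_lambda nD L -> rank_one_rich H ->
  SQ_up_to (fun x : X => `|x|) setT K eps -> SQ_up_to (@opnorm R D nD X) H K eps.
Proof.
move=> eps0 infL LK HL Hrich Xsq A AH A1 AK.
have [E [EK TE]] := exists_small_dense (subset_trans AH HL) AK infL LK.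
pose N := [set `|w|^-1 *: w | w in [set w | E w /\ w != 0]].
have [||x [_ [nx hx]]] := Xsq N (fun _ _ => I).
  by move=> _ [w [_ w0] <-]; apply: normfZV.
  apply: card_lt_le_trans (card_image_le _ _) _.
  by apply: card_lt_le_trans EK; apply: subset_card_le => w [].
have [S [HS S1 Sx]] := Hrich x nx.
exists S; split=> //; split=> // T AT.
apply: opnorm_add_rank_one_le eps0 nx _ _ (A1 T AT) (TE T AT) Sx.
  move=> w b Ew w0; have [] := hx (`|w|^-1 *: w); first by exists w.
  exact: norm_add_scale_le.
by have [] := HL T (AH T AT).
Qed.

End OperatorNorm.

Section Duals.
Variables (R : realType) (Y : normedModType R).

Lemma dual_bdd (ys : dual Y) : bdd_lin (fun y : Y => `|y|) (dval ys).
Proof. by have := dvalP ys; rewrite unfold_in => /asboolP. Qed.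

Lemma dual_norm_ge0 (ys : dual Y) : 0 <= dual_norm ys.
Proof.
apply: le_trans (opnorm_ub (fun y => normr_ge0 y) (d := 0) (dual_bdd ys) _) => //.
by rewrite normr0.
Qed.

Lemma dual_norm0 : dual_norm (0 : dual Y) = 0.
Proof.
apply/le_anti; rewrite dual_norm_ge0 andbT.
by apply: opnorm_le => [|y _]; rewrite ?normr0 // [dval 0 y]/= normr0.
Qed.

Lemma dual_eval_le (ys : dual Y) (y : Y) : `|y| <= 1 -> `|ys y| <= dual_norm ys.
Proof. by move=> y1; apply: opnorm_ub (dual_bdd ys) y1. Qed.

Lemma exists_norming_dual (y0 : Y) : `|y0| = 1 ->
  exists ys : dual Y, (forall y, `|ys y| <= `|y|) /\ ys y0 = 1.
Proof.
move=> /exists_norming_functional[f [flin fb f1]].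
have fP : (f : Y -> R^o) \in @dual_pred R Y.
  by rewrite unfold_in; apply/asboolP; split=> //; exists 1 => d; rewrite mul1r.
by exists (Dual fP).
Qed.

Lemma nontrivial_exists_unit : nontrivial Y -> exists y0 : Y, `|y0| = 1.
Proof.
by move=> [y y0]; exists (`|y|^-1 *: y); apply: normfZV.
Qed.

Lemma tens_dual_rank_one_rich (X : normedModType R) (H : set (Y -> X)) :
  nontrivial Y -> (forall (ys : dual Y) (x : X), H (tens_dual ys x)) ->
  rank_one_rich (fun y : Y => `|y|) H.
Proof.
move=> /nontrivial_exists_unit[y0 ny0] Htens x nx.
have [ys [ysb ys1]] := exists_norming_dual ny0.
exists (tens_dual ys x); split=> // [|d d1]; last first.
  by exists (ys d) => //; apply: le_trans (ysb d) d1.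
have y01 : `|y0| <= 1 by rewrite ny0.
exact: (opnorm_rank_one (fun y : Y => normr_ge0 y) (normr0 Y) (dual_bdd ys).1 ysb y01).
Qed.

Lemma tens_bidual_rank_one_rich (X : normedModType R) (H : set (dual Y -> X)) :
  nontrivial Y -> (forall (y : Y) (x : X), H (tens_bidual y x)) ->
  rank_one_rich (@dual_norm R Y) H.
Proof.
move=> /nontrivial_exists_unit[y0 ny0] Htens x nx.
have [ys [ysb ys1]] := exists_norming_dual ny0.
have y01 : `|y0| <= 1 by rewrite ny0.
exists (tens_bidual y0 x); split=> // [|d d1].
  apply: (opnorm_rank_one dual_norm_ge0 dual_norm0 (f := fun d : dual Y => d y0)) ys1 nx.
  - by [].
  - by move=> d; apply: dual_eval_le.
  - by apply: (opnorm_le (normr0 Y)) => y' y'1; apply: le_trans (ysb y') y'1.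
by exists (d y0) => //; apply: le_trans (dual_eval_le d y01) d1.
Qed.

End Duals.

Theorem theorem4p6 (R : realType) (K L : Type)
  (X Y : completeNormedModType R) :
  infinite_set [set: K] -> infinite_set [set: L] ->
  card_lt [set: L] [set: K] ->
  nontrivial X -> nontrivial Y ->
  (* ASQ case *)
  (ASQ_lt (fun x : X => `|x|) setT K ->
     (forall H : set (Y -> X),
        closed_subspace_L (fun y : Y => `|y|) L H ->
        (forall (ys : dual Y) (x : X), H (tens_dual ys x)) ->
        ASQ_lt (@opnorm R Y (fun y : Y => `|y|) X) H K) /\
     (forall H : set (dual Y -> X),
        closed_subspace_L (@dual_norm R Y) L H ->
        (forall (y : Y) (x : X), H (tens_bidual y x)) ->
        ASQ_lt (@opnorm R (dual Y) (@dual_norm R Y) X) H K)) /\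
  (* SQ case *)
  (SQ_lt (fun x : X => `|x|) setT K ->
     (forall H : set (Y -> X),
        closed_subspace_L (fun y : Y => `|y|) L H ->
        (forall (ys : dual Y) (x : X), H (tens_dual ys x)) ->
        SQ_lt (@opnorm R Y (fun y : Y => `|y|) X) H K) /\
     (forall H : set (dual Y -> X),
        closed_subspace_L (@dual_norm R Y) L H ->
        (forall (y : Y) (x : X), H (tens_bidual y x)) ->
        SQ_lt (@opnorm R (dual Y) (@dual_norm R Y) X) H K)).
Proof.
(* [kappa] is infinite as [lambda] is, and (A)SQ forces [X] to be nontrivial. *)
move=> _ infL LK _ ntY.
have nY_ge0 y := normr_ge0 (y : Y); have nY0 := normr0 Y.
have dn_ge0 := @dual_norm_ge0 R Y; have dn0 := @dual_norm0 R Y.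
split=> [/ASQ_ltP sqX|/SQ_ltP sqX]; split=> H [HL _] Ht.
- apply/ASQ_ltP => e e0.
  exact: (SQ_up_to_opnorm nY_ge0 nY0 (ltW e0) infL LK HL
    (tens_dual_rank_one_rich ntY Ht) (sqX e e0)).
- apply/ASQ_ltP => e e0.
  exact: (SQ_up_to_opnorm dn_ge0 dn0 (ltW e0) infL LK HL
    (tens_bidual_rank_one_rich ntY Ht) (sqX e e0)).
- apply/SQ_ltP.
  exact: (SQ_up_to_opnorm nY_ge0 nY0 (lexx 0) infL LK HL
    (tens_dual_rank_one_rich ntY Ht) sqX).
- apply/SQ_ltP.
  exact: (SQ_up_to_opnorm dn_ge0 dn0 (lexx 0) infL LK HL
    (tens_bidual_rank_one_rich ntY Ht) sqX).
Qed.
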